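(* Let $\mu\in(0,1]$ and let $G$, $H$ be two $k$-uniform hypergraphs such that there exists a homomorphism $\psi$ from $G$ to $H$. If $H$ has the $\mu$-fractional property, then so does $G$. In particular, if a $k$-uniform hypergraph has the $\mu$-fractional property, then so do all of its subhypergraphs.
   Context: A homomorphism from $G$ to $H$ is a map $\psi\colon V(G)\to V(H)$ such that $\psi[e]\in E(H)$ for every edge $e\in E(G)$. A $k$-uniform hypergraph $H$ has the $\mu$-fractional property if for every family $(w_i)_{i\in V(H)}$ of nonnegative real numbers there exists an independent set $Z\subseteq V(H)$ (a set containing no edge of $H$) such that $\sum_{i\in Z}w_i\geq\mu\sum_{i\in V(H)}w_i$. *)

From HB Require Import structures.
From mathcomp Require Import all_boot all_order all_algebra.
From mathcomp Require Import reals.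
Set Implicit Arguments. Unset Strict Implicit. Unset Printing Implicit Defensive.
Import Order.TTheory GRing.Theory Num.Theory.
Local Open Scope ring_scope.

(* A (finite) hypergraph whose vertices live in a finite ambient type T:
   an explicit vertex set and a set of edges (each a set of vertices). *)
Record hypergraph (T : finType) := Hypergraph {
  verts : {set T};
  edges : {set {set T}} }.

Definition uniform (k : nat) (T : finType) (H : hypergraph T) : Prop :=
  forall e, e \in edges H -> e \subset verts H /\ #|e| = k.

Definition independent (T : finType) (H : hypergraph T) (Z : {set T}) : Prop :=
  Z \subset verts H /\ forall e, e \in edges H -> ~~ (e \subset Z).

Definition fractional_property (R : realType) (mu : R) (T : finType)
    (H : hypergraph T) : Prop :=
  forall w : T -> R, (forall i, i \in verts H -> 0 <= w i) ->
    exists Z : {set T}, independent H Z /\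
      mu * (\sum_(i in verts H) w i) <= \sum_(i in Z) w i.

Definition homomorphism (T1 T2 : finType) (G : hypergraph T1) (H : hypergraph T2)
    (psi : T1 -> T2) : Prop :=
  (forall v, v \in verts G -> psi v \in verts H) /\
  (forall e, e \in edges G -> psi @: e \in edges H).

Definition subhypergraph (T : finType) (G H : hypergraph T) : Prop :=
  verts G \subset verts H /\ edges G \subset edges H.

From HB Require Import structures.
From mathcomp Require Import all_boot all_order all_algebra.
From mathcomp Require Import reals.
Set Implicit Arguments. Unset Strict Implicit. Unset Printing Implicit Defensive.
Import Order.TTheory GRing.Theory Num.Theory.
Local Open Scope ring_scope.

(* Push the weights of G forward along psi: vertex j of H gets the total
   weight of its fibre.  An independent set Z of H for these weights pulls
   back to the independent set V(G) :&: psi^-1(Z) of G, which carries exactly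
   the weight of Z, while V(H) receives all the weight of V(G). *)

Lemma big_fibres (R : nmodType) (T1 T2 : finType) (V : {set T1})
    (A : {pred T2}) (psi : T1 -> T2) (w : T1 -> R) :
  \sum_(j in A) \sum_(i in V | psi i == j) w i =
  \sum_(i in V | psi i \in A) w i.
Proof.
rewrite (partition_big psi (mem A)) /=; last by move=> i /andP[].
apply: eq_bigr => j jA; apply: eq_bigl => i.
by case: (i \in V) => //=; case: eqP => [->|]; rewrite ?jA ?andbF.
Qed.

Section Homomorphism.

Variables (T1 T2 : finType) (G : hypergraph T1) (H : hypergraph T2).
Variable psi : T1 -> T2.
Hypothesis psi_hom : homomorphism G H psi.

Lemma preimset_independent (Z : {set T2}) :
  independent H Z -> independent G (verts G :&: psi @^-1: Z).
Proof.
case: psi_hom => _ edge_img [_ no_edge]; split; first exact: subsetIl.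
move=> e eG; apply: contra (no_edge _ (edge_img e eG)) => /subsetP eZ.
by apply/subsetP => _ /imsetP[x /eZ + ->]; rewrite !inE => /andP[].
Qed.

Lemma homomorphism_fractional_property (R : realType) (mu : R) :
  fractional_property mu H -> fractional_property mu G.
Proof.
case: psi_hom => vert_img _ fracH w w_ge0.
pose wH j := \sum_(i in verts G | psi i == j) w i.
have wH_ge0 j : j \in verts H -> 0 <= wH j.
  by move=> _; apply: sumr_ge0 => i /andP[/w_ge0].
have [Z [indZ weightZ]] := fracH wH wH_ge0.
exists (verts G :&: psi @^-1: Z); split; first exact: preimset_independent.
move: weightZ; rewrite !big_fibres.
have -> : \sum_(i in verts G | psi i \in verts H) w i = \sum_(i in verts G) w i.
  by apply: eq_bigl => i; case iG: (i \in verts G); rewrite //= vert_img.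
suff -> : \sum_(i in verts G :&: psi @^-1: Z) w i =
          \sum_(i in verts G | psi i \in Z) w i by [].
by apply: eq_bigl => i; rewrite !inE.
Qed.

End Homomorphism.

Lemma subhypergraph_homomorphism (T : finType) (G H : hypergraph T) :
  subhypergraph G H -> homomorphism G H id.
Proof.
case=> /subsetP sub_verts /subsetP sub_edges; split => // e /sub_edges.
by rewrite imset_id.
Qed.

Theorem lemma3p2 (R : realType) (mu : R) (k : nat) :
  0 < mu <= 1 ->
  (forall (T1 T2 : finType) (G : hypergraph T1) (H : hypergraph T2),
      uniform k G -> uniform k H ->
      (exists psi : T1 -> T2, homomorphism G H psi) ->
      fractional_property mu H -> fractional_property mu G) /\
  (forall (T : finType) (H G : hypergraph T),
      uniform k H -> subhypergraph G H ->
      fractional_property mu H -> fractional_property mu G).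
Proof.
move=> _; split.
  move=> T1 T2 G H _ _ [psi psi_hom].
  exact: (homomorphism_fractional_property psi_hom).
move=> T H G _ /subhypergraph_homomorphism id_hom.
exact: (homomorphism_fractional_property id_hom).
Qed.
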